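(* For every instance and every seller $k\in S$, $r_k\ge(1-\theta)r^\star$, where $\theta=c_{\max}/B$, $r^\star$ is the stopping rate of $\mathrm{EnvyFree}(f)$ on the cost vector $c$, and $r_k$ is the stopping rate of $\mathrm{EnvyFree}(f)$ on the cost vector obtained from $c$ by replacing $c_k$ with $0$, with $f(x)=\ln(e-x)$ for $0\le x\le e-1$ and $f(x)=0$ otherwise.
   Context: Setting: a buyer with budget $B>0$ faces a finite set $S$ of sellers; seller $i$ owns one divisible item giving utility $u_i>0$ and has cost $c_i\ge0$; $c_{\max}=\max_ic_i$. For $r>0$: $f_r(x)=f(x/r)$, $Q_r(x)=xf_r(x)+\int_x^\infty f_r(y)\,dy$, $P_{i,r}(x)=u_iQ_r(x/u_i)$. The stopping rate of $\mathrm{EnvyFree}(f)$ on a cost vector $c'$ is the value at which, decreasing $r$ from $\infty$, the nondecreasing continuous function $r\mapsto\sum_iP_{i,r}(c'_i)$ first equals $B$. *)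

From Stdlib Require Import Reals Lra.
From Coquelicot Require Import Coquelicot.
Open Scope R_scope.

Definition f (x : R) : R :=
  if Rle_dec 0 x then
    if Rle_dec x (exp 1 - 1) then ln (exp 1 - x) else 0
  else 0.

Definition f_r (r x : R) : R := f (x / r).

Definition int_to_infty (g : R -> R) (x : R) : R :=
  real (Lim (fun M => RInt g x M) p_infty).

Definition Q (r x : R) : R := x * f_r r x + int_to_infty (f_r r) x.

Definition P (ui r x : R) : R := ui * Q r (x / ui).

Fixpoint sumR (n : nat) (F : nat -> R) : R :=
  match n with
  | O => 0
  | S m => sumR m F + F m
  end.

(** max_{i<n} c_i (costs are nonnegative and n >= 1 in use, so starting at 0 is harmless). *)
Fixpoint cmax (n : nat) (c : nat -> R) : R :=
  match n with
  | O => 0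
  | S m => Rmax (cmax m c) (c m)
  end.

Definition total (n : nat) (u c' : nat -> R) (r : R) : R :=
  sumR n (fun i => P (u i) r (c' i)).

(** r is the stopping rate of EnvyFree(f) on cost vector c': decreasing r
    from +oo, r is the first value where the total payment equals B, i.e.
    total(r) = B and total(r') <> B for every r' > r. *)
Definition is_stopping_rate (n : nat) (u c' : nat -> R) (B r : R) : Prop :=
  0 < r /\ total n u c' r = B /\ (forall r', r < r' -> total n u c' r' <> B).

Definition zero_at (c : nat -> R) (k : nat) : nat -> R :=
  fun i => if Nat.eqb i k then 0 else c i.

(* Increasing the rate by a factor l >= 1 multiplies every payment P_{i,r}(x) by at
   least l (Q_{lr}(lx) = l Q_r(x) and Q is nonincreasing), while zeroing the cost of
   seller k raises her payment by at most c_k (f <= 1, so Q_r(0) - Q_r(x) <= x).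
   With l = r*/r_k these give l B <= B + c_k, i.e. r* <= (1 + theta) r_k, and
   (1 - theta)(1 + theta) <= 1 yields the bound.  Only total(r) = B at the two
   rates is used, not that they are the first such rates. *)
From Stdlib Require Import Reals Lra Lia.
From Coquelicot Require Import Coquelicot.
(* Imported after Coquelicot, which also exports a name [f]. *)
Open Scope R_scope.

Lemma exp1_gt2 : 2 < exp 1.
Proof. pose proof (exp_ineq1 1 ltac:(lra)); lra. Qed.

Lemma f_ge0 x : 0 <= f x.
Proof.
  pose proof exp1_gt2; unfold f.
  destruct (Rle_dec 0 x); [destruct (Rle_dec x (exp 1 - 1))|]; try lra.
  rewrite <- ln_1; apply ln_le; lra.
Qed.

Lemma f_le1 x : f x <= 1.
Proof.
  pose proof exp1_gt2; unfold f.
  destruct (Rle_dec 0 x); [destruct (Rle_dec x (exp 1 - 1))|]; try lra.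
  rewrite <- (ln_exp 1) at 2; apply ln_le; lra.
Qed.

Lemma f_nonincreasing a b : 0 <= a <= b -> f b <= f a.
Proof.
  intros Hab; pose proof exp1_gt2; pose proof (f_ge0 a); unfold f in *.
  destruct (Rle_dec 0 b), (Rle_dec 0 a); try lra.
  destruct (Rle_dec b (exp 1 - 1)), (Rle_dec a (exp 1 - 1)); try lra.
  apply ln_le; lra.
Qed.

Lemma f_eq0 x : exp 1 - 1 < x -> f x = 0.
Proof.
  intros Hx; pose proof exp1_gt2; unfold f.
  destruct (Rle_dec 0 x), (Rle_dec x (exp 1 - 1)); lra.
Qed.

(* A continuous extension of f from [0, +oo) to R, needed for integrability:
   f itself jumps at 0. *)
Definition f_ext (x : R) : R := ln (exp 1 - Rmin x (exp 1 - 1)).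

Lemma f_ext_eq x : 0 <= x -> f x = f_ext x.
Proof.
  intros Hx; unfold f, f_ext, Rmin.
  destruct (Rle_dec 0 x); [|lra].
  destruct (Rle_dec x (exp 1 - 1)); [reflexivity|].
  replace (exp 1 - (exp 1 - 1)) with 1 by ring.
  symmetry; apply ln_1.
Qed.

Lemma Rmin_Rabs a b : Rmin a b = (a + b - Rabs (a - b)) / 2.
Proof. unfold Rmin; destruct (Rle_dec a b); [rewrite Rabs_left1 | rewrite Rabs_right]; lra. Qed.

Lemma continuous_Rmin_l c x : continuous (fun z => Rmin z c) x.
Proof.
  apply (continuous_ext (fun z => (z + c - Rabs (z - c)) / 2)).
  { intros z; now rewrite Rmin_Rabs. }
  apply continuity_pt_filterlim; reg.
Qed.

Lemma continuous_f_ext x : continuous f_ext x.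
Proof.
  apply (continuous_comp (fun z => Rmin z (exp 1 - 1)) (fun w => ln (exp 1 - w))).
  - apply continuous_Rmin_l.
  - apply (@ex_derive_continuous R_AbsRing R_NormedModule).
    pose proof (Rmin_r x (exp 1 - 1)); pose proof exp1_gt2.
    auto_derive; lra.
Qed.

Lemma ex_RInt_f_r r a b : 0 < r -> 0 <= a <= b -> ex_RInt (f_r r) a b.
Proof.
  intros Hr Hab.
  apply (ex_RInt_ext (fun y => f_ext (y / r))).
  - intros y Hy; rewrite Rmin_left in Hy by lra.
    unfold f_r; rewrite f_ext_eq; [reflexivity|].
    apply Rdiv_le_0_compat; lra.
  - apply (@ex_RInt_continuous R_CompleteNormedModule); intros y _.
    apply (continuous_comp (fun y => y / r) f_ext); [|apply continuous_f_ext].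
    apply (@ex_derive_continuous R_AbsRing R_NormedModule); auto_derive; lra.
Qed.

Lemma RInt_f_r_eq0 r a b : 0 < r -> r * (exp 1 - 1) <= a <= b -> RInt (f_r r) a b = 0.
Proof.
  intros Hr Hab.
  rewrite (RInt_ext _ (fun _ => 0)).
  - rewrite RInt_const; apply (@scal_zero_r R_Ring R_ModuleSpace).
  - intros y Hy; rewrite Rmin_left, Rmax_right in Hy by lra.
    unfold f_r; apply f_eq0.
    apply (Rmult_lt_reg_l r); [lra|].
    replace (r * (y / r)) with y by (field; lra).
    lra.
Qed.

Lemma RInt_f_r_Chasles r a b c : 0 < r -> 0 <= a <= b -> b <= c ->
  RInt (f_r r) a c = RInt (f_r r) a b + RInt (f_r r) b c.
Proof.
  intros Hr Hab Hbc.
  rewrite <- (RInt_Chasles (f_r r) a b c); [reflexivity | |]; apply ex_RInt_f_r; lra.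
Qed.

(* f_r vanishes beyond r (e - 1), so the improper integral is a proper one. *)
Lemma int_to_infty_f_r r x M : 0 < r -> 0 <= x <= M -> r * (exp 1 - 1) <= M ->
  int_to_infty (f_r r) x = RInt (f_r r) x M.
Proof.
  intros Hr HxM HM.
  assert (Hstable : forall y, M <= y -> RInt (f_r r) x y = RInt (f_r r) x M).
  { intros y Hy.
    rewrite (RInt_f_r_Chasles r x M y), (RInt_f_r_eq0 r M y) by lra.
    apply Rplus_0_r. }
  unfold int_to_infty.
  rewrite (Lim_ext_loc (fun _ => RInt (f_r r) x M)).
  - now rewrite Lim_const.
  - exists M; intros y Hy; symmetry; apply Hstable; lra.
Qed.

Lemma Q_sub r a b : 0 < r -> 0 <= a <= b ->
  Q r a - Q r b = a * f_r r a - b * f_r r b + RInt (f_r r) a b.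
Proof.
  intros Hr Hab; unfold Q.
  set (M := Rmax b (r * (exp 1 - 1))).
  assert (b <= M) by apply Rmax_l.
  assert (r * (exp 1 - 1) <= M) by apply Rmax_r.
  rewrite (int_to_infty_f_r r a M), (int_to_infty_f_r r b M) by lra.
  rewrite (RInt_f_r_Chasles r a b M) by lra.
  ring.
Qed.

Lemma f_r_nonincreasing r a b : 0 < r -> 0 <= a <= b -> f_r r b <= f_r r a.
Proof.
  intros Hr Hab; unfold f_r; apply f_nonincreasing; split.
  - apply Rdiv_le_0_compat; lra.
  - apply Rmult_le_compat_r; [left; apply Rinv_0_lt_compat|]; lra.
Qed.

Lemma Q_nonincreasing r a b : 0 < r -> 0 <= a <= b -> Q r b <= Q r a.
Proof.
  intros Hr Hab.
  assert (Hint : RInt (fun _ => f_r r b) a b <= RInt (f_r r) a b).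
  { apply RInt_le; try lra.
    - apply ex_RInt_const.
    - apply ex_RInt_f_r; lra.
    - intros y Hy; apply f_r_nonincreasing; lra. }
  rewrite RInt_const in Hint; change (scal (b - a) (f_r r b)) with ((b - a) * f_r r b) in Hint.
  assert (0 <= a * (f_r r a - f_r r b)).
  { apply Rmult_le_pos; [lra|]; pose proof (f_r_nonincreasing r a b Hr Hab); lra. }
  pose proof (Q_sub r a b Hr Hab); lra.
Qed.

Lemma Q_sub0_le r x : 0 < r -> 0 <= x -> Q r 0 - Q r x <= x.
Proof.
  intros Hr Hx.
  assert (Hint : RInt (f_r r) 0 x <= RInt (fun _ => 1) 0 x).
  { apply RInt_le; try lra.
    - apply ex_RInt_f_r; lra.
    - apply ex_RInt_const.
    - intros y _; apply f_le1. }
  rewrite RInt_const in Hint; change (scal (x - 0) 1) with ((x - 0) * 1) in Hint.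
  assert (0 <= x * f_r r x) by (apply Rmult_le_pos; [lra | apply f_ge0]).
  rewrite (Q_sub r 0 x) by lra.
  lra.
Qed.

Lemma Q_scale r l x : 0 < r -> 0 < l -> 0 <= x -> Q (l * r) (l * x) = l * Q r x.
Proof.
  intros Hr Hl Hx.
  assert (Hf : forall y, f_r (l * r) (l * y + 0) = f_r r y).
  { intros y; unfold f_r; f_equal; field; lra. }
  set (M := Rmax x (r * (exp 1 - 1))).
  assert (x <= M) by apply Rmax_l.
  assert (r * (exp 1 - 1) <= M) by apply Rmax_r.
  assert (Hlin : RInt (f_r (l * r)) (l * x) (l * M) = l * RInt (f_r r) x M).
  { replace (l * x) with (l * x + 0) by ring.
    replace (l * M) with (l * M + 0) by ring.
    rewrite <- (@RInt_comp_lin R_CompleteNormedModule).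
    - rewrite <- (@RInt_scal R_CompleteNormedModule) by (apply ex_RInt_f_r; lra).
      apply RInt_ext; intros y _; now rewrite Hf.
    - apply ex_RInt_f_r; nra. }
  unfold Q.
  rewrite (int_to_infty_f_r (l * r) (l * x) (l * M)) by nra.
  rewrite (int_to_infty_f_r r x M), Hlin by lra.
  replace (l * x) with (l * x + 0) at 2 by ring.
  rewrite Hf; ring.
Qed.

Lemma Q_scale_le r l x : 0 < r -> 1 <= l -> 0 <= x -> l * Q r x <= Q (l * r) x.
Proof.
  intros Hr Hl Hx.
  rewrite <- Q_scale by lra.
  apply Q_nonincreasing; nra.
Qed.

Lemma P_zero_cost_le ui r x : 0 < ui -> 0 < r -> 0 <= x -> P ui r 0 <= P ui r x + x.
Proof.
  intros Hu Hr Hx; unfold P.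
  replace (0 / ui) with 0 by (field; lra).
  assert (Hxu : 0 <= x / ui) by (apply Rdiv_le_0_compat; lra).
  assert (ui * (Q r 0 - Q r (x / ui)) <= ui * (x / ui))
    by (apply Rmult_le_compat_l; [lra | now apply Q_sub0_le]).
  replace (ui * (x / ui)) with x in * by (field; lra).
  lra.
Qed.

Lemma P_scale_le ui r l x : 0 < ui -> 0 < r -> 1 <= l -> 0 <= x ->
  l * P ui r x <= P ui (l * r) x.
Proof.
  intros Hu Hr Hl Hx; unfold P.
  assert (0 <= x / ui) by (apply Rdiv_le_0_compat; lra).
  pose proof (Q_scale_le r l (x / ui) Hr Hl ltac:(lra)); nra.
Qed.

Lemma sumR_le m F G : (forall i, (i < m)%nat -> F i <= G i) -> sumR m F <= sumR m G.
Proof.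
  induction m as [|m IH]; simpl; intros H; [lra|].
  pose proof (H m ltac:(lia)).
  assert (sumR m F <= sumR m G) by (apply IH; intros; apply H; lia).
  lra.
Qed.

Lemma sumR_add m F G : sumR m (fun i => F i + G i) = sumR m F + sumR m G.
Proof. induction m as [|m IH]; simpl; [|rewrite IH]; ring. Qed.

Lemma sumR_scal m l F : sumR m (fun i => l * F i) = l * sumR m F.
Proof. induction m as [|m IH]; simpl; [|rewrite IH]; ring. Qed.

Lemma sumR_delta m k a :
  sumR m (fun i => if Nat.eqb i k then a else 0) = if Nat.ltb k m then a else 0.
Proof.
  induction m as [|m IH]; simpl; [reflexivity|]; rewrite IH.
  destruct (Nat.ltb_spec k m), (Nat.eqb_spec m k), (Nat.ltb_spec k (S m)); lia || lra.
Qed.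

Lemma le_cmax m c k : (k < m)%nat -> c k <= cmax m c.
Proof.
  induction m as [|m IH]; simpl; intros Hk; [lia|].
  destruct (Nat.eq_dec k m) as [->|]; [apply Rmax_r|].
  eapply Rle_trans; [apply IH; lia | apply Rmax_l].
Qed.

Section Totals.

Variables (n : nat) (u : nat -> R).
Hypothesis Hu : forall i, (i < n)%nat -> 0 < u i.

Lemma total_zero_at_le c k r : (k < n)%nat -> 0 < r ->
  (forall i, (i < n)%nat -> 0 <= c i) ->
  total n u (zero_at c k) r <= total n u c r + c k.
Proof.
  intros Hk Hr Hc.
  assert (Hdelta : sumR n (fun i => if Nat.eqb i k then c k else 0) = c k).
  { rewrite sumR_delta; now replace (Nat.ltb k n) with true by (symmetry; now apply Nat.ltb_lt). }
  rewrite <- Hdelta.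
  unfold total; rewrite <- sumR_add; apply sumR_le; intros i Hi.
  unfold zero_at; destruct (Nat.eqb_spec i k) as [->|]; [|lra].
  apply P_zero_cost_le; auto.
Qed.

Lemma total_scale_le c r l : 0 < r -> 1 <= l ->
  (forall i, (i < n)%nat -> 0 <= c i) ->
  l * total n u c r <= total n u c (l * r).
Proof.
  intros Hr Hl Hc.
  unfold total; rewrite <- sumR_scal; apply sumR_le; intros i Hi.
  apply P_scale_le; auto.
Qed.

End Totals.

Lemma zero_at_ge0 n c k : (forall i, (i < n)%nat -> 0 <= c i) ->
  forall i, (i < n)%nat -> 0 <= zero_at c k i.
Proof. intros Hc i Hi; unfold zero_at; destruct (Nat.eqb i k); [lra | auto]. Qed.

Lemma stopping_rate_zero_at_bound n u c B k rstar rk :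
  0 < B -> (forall i, (i < n)%nat -> 0 < u i) ->
  (forall i, (i < n)%nat -> 0 <= c i) -> (k < n)%nat ->
  is_stopping_rate n u c B rstar -> is_stopping_rate n u (zero_at c k) B rk ->
  rstar * B <= rk * (B + c k).
Proof.
  intros HB Hu Hc Hk [Hrstar [Tstar _]] [Hrk [Tk _]].
  pose proof (Hc k Hk).
  destruct (Rle_lt_dec rstar rk) as [Hle|Hlt]; [nra|].
  set (l := rstar / rk).
  assert (Hl : 1 <= l) by (unfold l; apply Rcomplements.Rle_div_r; lra).
  assert (Hrs : rstar = l * rk) by (unfold l; field; lra).
  assert (Hscale : l * B <= total n u (zero_at c k) rstar).
  { rewrite <- Tk, Hrs; apply total_scale_le; [exact Hu | lra | lra | now apply zero_at_ge0]. }
  pose proof (total_zero_at_le n u Hu c k rstar Hk Hrstar Hc).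
  assert (l * B <= B + c k) by lra.
  rewrite Hrs; nra.
Qed.

Theorem lemma10 (n : nat) (u c : nat -> R) (B : R)
  (HB : 0 < B)
  (Hu : forall i, (i < n)%nat -> 0 < u i)
  (Hc : forall i, (i < n)%nat -> 0 <= c i)
  (k : nat) (Hk : (k < n)%nat)
  (rstar rk : R)
  (Hrstar : is_stopping_rate n u c B rstar)
  (Hrk : is_stopping_rate n u (zero_at c k) B rk) :
  rk >= (1 - cmax n c / B) * rstar.
Proof.
  pose proof (stopping_rate_zero_at_bound n u c B k rstar rk HB Hu Hc Hk Hrstar Hrk) as Hbound.
  destruct Hrstar as [Hrstar _], Hrk as [Hrk _].
  pose proof (le_cmax n c k Hk); pose proof (Hc k Hk).
  set (theta := cmax n c / B).
  assert (Hcmax : cmax n c = theta * B) by (unfold theta; field; lra).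
  assert (Hr : rstar <= rk * (1 + theta)) by nra.
  destruct (Rle_lt_dec theta 1); nra.
Qed.
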